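(* Let $\mathcal{P}\subset\mathbb{R}^d$ be a finite set of item vectors, $\bm{q}\in\mathbb{R}^d\setminus\{\bm{0}\}$, $k>1$ an integer, $\lambda\in[0,1]$, $\mu>0$, and assume $\langle\bm{x},\bm{y}\rangle\ge0$ for all $\bm{x},\bm{y}\in\mathcal{P}\cup\{\bm{q}\}$. Let $\mathcal{N}\subseteq\mathcal{P}$ be nonempty with center $\bm{c}=\frac{1}{|\mathcal{N}|}\sum_{\bm{p}\in\mathcal{N}}\bm{p}\neq\bm{0}$, let $\theta\in[0,\pi]$ be the angle between $\bm{c}$ and $\bm{q}$, and for each nonzero $\bm{p}\in\mathcal{N}$ let $\varphi_{\bm{p}}\in[0,\pi]$ be the angle between $\bm{p}$ and $\bm{c}$. Then for every such $\bm{p}$, every $\mathcal{S}\subseteq\mathcal{P}$, and $\Delta_f$ equal to either $\Delta_{f_{avg}}$ or $\Delta_{f_{max}}$, $$\Delta_f(\bm{p},\mathcal{S})\le\tfrac{\lambda}{k}\,\|\bm{p}\|\,\|\bm{q}\|\cos(|\theta-\varphi_{\bm{p}}|).$$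
   Context: $\Delta_{f_{avg}}(\bm{p},\mathcal{S}) = \frac{\lambda}{k}\langle\bm{p},\bm{q}\rangle - \frac{2\mu(1-\lambda)}{k(k-1)}\sum_{\bm{p}'\in\mathcal{S}}\langle\bm{p},\bm{p}'\rangle$ and $\Delta_{f_{max}}(\bm{p},\mathcal{S}) = \frac{\lambda}{k}\langle\bm{p},\bm{q}\rangle - \mu(1-\lambda)\big(\max_{\bm{p}_x\ne\bm{p}_y\in\mathcal{S}\cup\{\bm{p}\}}\langle\bm{p}_x,\bm{p}_y\rangle - \max_{\bm{p}_x\ne\bm{p}_y\in\mathcal{S}}\langle\bm{p}_x,\bm{p}_y\rangle\big)$, where a maximum over an empty collection of pairs is taken to be $0$. The set $\mathcal{N}$ plays the role of a leaf node of a ball-cone tree (BC-Tree) storing, for each item, its norm and its angle to the node center. *)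

From HB Require Import structures.
From mathcomp Require Import all_boot all_order all_algebra.
From mathcomp Require Import finmap.
From mathcomp Require Import all_classical all_reals all_analysis.
Set Implicit Arguments. Unset Strict Implicit. Unset Printing Implicit Defensive.
Import Order.TTheory GRing.Theory Num.Theory.
Local Open Scope ring_scope.
Local Open Scope fset_scope.

Section Defs.
Variables (R : realType) (d : nat).
Notation vec := 'rV[R]_d.

Definition dot (x y : vec) : R := \sum_(i < d) x ord0 i * y ord0 i.

Definition vnorm (x : vec) : R := Num.sqrt (dot x x).

Definition angle (x y : vec) : R := acos (dot x y / (vnorm x * vnorm y)).

Definition node_center (N : {fset vec}) : vec := (#|` N|%:R)^-1 *: \sum_(x <- N) x.

(* max_{x <> y in S} <x, y>, taken to be 0 if there is no such pair *)
Definition maxpair (S : {fset vec}) : R :=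
  match [seq dot xy.1 xy.2 | xy <- [seq (x, y) | x <- enum_fset S, y <- enum_fset S] & xy.1 != xy.2] with
  | [::] => 0
  | v :: vs => foldr Num.max v vs
  end.

Definition Delta_avg (k : nat) (lam mu : R) (q p : vec) (S : {fset vec}) : R :=
  lam / k%:R * dot p q
  - (2 * mu * (1 - lam)) / (k%:R * (k%:R - 1)) * \sum_(p' <- S) dot p p'.

Definition Delta_max (k : nat) (lam mu : R) (q p : vec) (S : {fset vec}) : R :=
  lam / k%:R * dot p q - mu * (1 - lam) * (maxpair (p |` S) - maxpair S).

End Defs.

From HB Require Import structures.
From mathcomp Require Import all_boot all_order all_algebra.
From mathcomp Require Import finmap.
From mathcomp Require Import all_classical all_reals all_analysis.
From mathcomp Require Import ring.
Import Order.TTheory GRing.Theory Num.Theory.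
Local Open Scope ring_scope.
Set Implicit Arguments. Unset Strict Implicit.

(* Split [p] and [q] into their components along the node center [c] and
   orthogonal to it.  The parallel parts contribute exactly
   [|p| |q| cos phi cos theta] to [<p, q>], and by Cauchy-Schwarz the orthogonal
   parts contribute at most [|p| |q| sin phi sin theta]; hence
   [<p, q> <= |p| |q| cos (theta - phi)].  Both marginal gains are at most
   [lam / k * <p, q>], since the diversity terms they subtract are nonnegative:
   all inner products are nonnegative, and adding [p] to [S] can only increase
   the largest pairwise inner product. *)

Section InnerProduct.
Variables (R : realType) (d : nat).
Implicit Types x y z c : 'rV[R]_d.

Lemma dotC x y : dot x y = dot y x.
Proof. by apply: eq_bigr => i _; rewrite mulrC. Qed.

Lemma dotDl x y z : dot (x + y) z = dot x z + dot y z.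
Proof. by rewrite /dot -big_split; apply: eq_bigr => i _; rewrite mxE mulrDl. Qed.

Lemma dotZl a x y : dot (a *: x) y = a * dot x y.
Proof. by rewrite /dot mulr_sumr; apply: eq_bigr => i _; rewrite mxE mulrA. Qed.

Lemma dotBl x y z : dot (x - y) z = dot x z - dot y z.
Proof. by rewrite dotDl -scaleN1r dotZl mulN1r. Qed.

Lemma dotZr a x y : dot x (a *: y) = a * dot x y.
Proof. by rewrite dotC dotZl dotC. Qed.

Lemma dotBr x y z : dot x (y - z) = dot x y - dot x z.
Proof. by rewrite dotC dotBl !(dotC x). Qed.

Lemma dot0l x : dot 0 x = 0.
Proof. by rewrite /dot big1 // => i _; rewrite mxE mul0r. Qed.

Lemma dotxx_ge0 x : 0 <= dot x x.
Proof. by apply: sumr_ge0 => i _; rewrite -expr2 sqr_ge0. Qed.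

Lemma dotxx_eq0 x : (dot x x == 0) = (x == 0).
Proof.
apply/idP/eqP => [|->]; last by rewrite dot0l.
rewrite psumr_eq0 => [/allP x0|i _]; last by rewrite -expr2 sqr_ge0.
apply/rowP => i; rewrite mxE.
by apply/eqP; rewrite -sqrf_eq0 expr2; exact: x0 (mem_index_enum _).
Qed.

Lemma dotxx_gt0 x : (0 < dot x x) = (x != 0).
Proof. by rewrite lt_def dotxx_eq0 dotxx_ge0 andbT. Qed.

(* Expanding [0 <= dot (y - t x) (y - t x)] at [t = dot x y / dot x x]. *)
Lemma dot_sqr_le x y : dot x y ^+ 2 <= dot x x * dot y y.
Proof.
have [x0|xx_neq0] := eqVneq (dot x x) 0.
  by move/eqP: x0; rewrite dotxx_eq0 => /eqP ->; rewrite dot0l expr0n /= mulr_ge0 ?dotxx_ge0.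
have xx_gt0 : 0 < dot x x by rewrite lt_def xx_neq0 dotxx_ge0.
have := dotxx_ge0 (y - (dot x y / dot x x) *: x).
rewrite dotBl !dotBr !dotZl !dotZr (dotC y x).
have -> : dot y y - dot x y / dot x x * dot x y
    - (dot x y / dot x x * dot x y - dot x y / dot x x * (dot x y / dot x x * dot x x))
    = dot y y - dot x y ^+ 2 / dot x x by field.
by rewrite subr_ge0 ler_pdivrMr // mulrC.
Qed.

Lemma vnorm_ge0 x : 0 <= vnorm x.
Proof. exact: sqrtr_ge0. Qed.

Lemma vnorm_gt0 x : (0 < vnorm x) = (x != 0).
Proof. by rewrite sqrtr_gt0 dotxx_gt0. Qed.

Lemma vnorm_sqr x : vnorm x ^+ 2 = dot x x.
Proof. by rewrite sqr_sqrtr // dotxx_ge0. Qed.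

Lemma norm_dot_le x y : `|dot x y| <= vnorm x * vnorm y.
Proof.
rewrite -sqrtr_sqr /vnorm -sqrtrM ?dotxx_ge0 //.
by rewrite ler_wsqrtr // dot_sqr_le.
Qed.

Lemma dot_le x y : dot x y <= vnorm x * vnorm y.
Proof. exact: le_trans (ler_norm _) (norm_dot_le x y). Qed.

End InnerProduct.

Section Angles.
Variables (R : realType) (d : nat).
Implicit Types x y p q c : 'rV[R]_d.

Definition cosine x y : R := dot x y / (vnorm x * vnorm y).

Lemma cosineC x y : cosine x y = cosine y x.
Proof. by rewrite /cosine dotC (mulrC (vnorm x)). Qed.

Lemma cosine_itv x y : -1 <= cosine x y <= 1.
Proof.
rewrite -ler_norml /cosine.
have [xy0|xy_neq0] := eqVneq (vnorm x * vnorm y) 0; first by rewrite xy0 invr0 mulr0 normr0.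
have xy_gt0 : 0 < vnorm x * vnorm y by rewrite lt_def xy_neq0 mulr_ge0 ?vnorm_ge0.
by rewrite normrM normfV (gtr0_norm xy_gt0) ler_pdivrMr // mul1r norm_dot_le.
Qed.

Lemma angleC x y : angle x y = angle y x.
Proof. by rewrite /angle; congr acos; exact: cosineC. Qed.

Lemma cos_angle x y : cos (angle x y) = cosine x y.
Proof. by rewrite /angle acosK // in_itv /= cosine_itv. Qed.

Lemma sin_angle x y : sin (angle x y) = Num.sqrt (1 - cosine x y ^+ 2).
Proof. exact/sin_acos/cosine_itv. Qed.

Definition orth c x := x - (dot x c / dot c c) *: c.

Lemma dot_orth c p q : c != 0 ->
  dot p q = dot p c * dot q c / dot c c + dot (orth c p) (orth c q).
Proof.
rewrite -dotxx_gt0 => /lt0r_neq0 cc_neq0.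
rewrite /orth !dotBl !dotBr !dotZl !dotZr (dotC c q).
by field.
Qed.

Lemma vnorm_orth c x : c != 0 -> x != 0 -> vnorm (orth c x) = vnorm x * sin (angle x c).
Proof.
move=> c0 x0.
have cc0 : dot c c != 0 by rewrite dotxx_eq0.
have xx0 : dot x x != 0 by rewrite dotxx_eq0.
have sq : vnorm (orth c x) ^+ 2 = vnorm x ^+ 2 * (1 - cosine x c ^+ 2).
  apply: (addrI (dot x c * dot x c / vnorm c ^+ 2)).
  rewrite !vnorm_sqr -dot_orth // /cosine expr_div_n exprMn !vnorm_sqr; field; exact/andP.
rewrite sin_angle -[vnorm (orth c x)]ger0_norm ?vnorm_ge0 // -sqrtr_sqr sq.
by rewrite sqrtrM ?sqr_ge0 // sqrtr_sqr ger0_norm ?vnorm_ge0.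
Qed.

Lemma dot_le_cos_angleB p q c : p != 0 -> q != 0 -> c != 0 ->
  dot p q <= vnorm p * vnorm q * cos (angle c q - angle p c).
Proof.
move=> p0 q0 c0.
have nc : vnorm c != 0 by rewrite gt_eqF ?vnorm_gt0.
have np : vnorm p != 0 by rewrite gt_eqF ?vnorm_gt0.
have nq : vnorm q != 0 by rewrite gt_eqF ?vnorm_gt0.
have -> : vnorm p * vnorm q * cos (angle c q - angle p c)
    = dot p c * dot q c / dot c c
      + vnorm (orth c p) * vnorm (orth c q).
  rewrite cosB !cos_angle (angleC c q) !vnorm_orth // /cosine -vnorm_sqr (dotC c q).
  by field; rewrite nc np nq.
by rewrite (dot_orth p q c0) lerD2l dot_le.
Qed.

End Angles.

Section MaxPair.
Variables (R : realType) (d : nat).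
Local Open Scope fset_scope.
Implicit Types S T : {fset 'rV[R]_d}.

Definition pair_dots S : seq R :=
  [seq dot xy.1 xy.2 | xy <- [seq (x, y) | x <- enum_fset S, y <- enum_fset S] & xy.1 != xy.2].

Lemma pair_dotsP S v :
  reflect (exists x y, [/\ x \in S, y \in S, x != y & v = dot x y]) (v \in pair_dots S).
Proof.
apply: (iffP mapP) => [[[x y]]|[x [y [xS yS xy ->]]]].
  rewrite mem_filter /= => /andP[xy /allpairsP[[x' y'] /= [xS yS [ex ey]]]] ->.
  by subst x' y'; exists x, y.
by exists (x, y) => //; rewrite mem_filter /= xy; apply/allpairsP; exists (x, y).
Qed.

Lemma foldr_max_bigE (v : R) vs : 0 <= v ->
  foldr Num.max v vs = \big[Num.max/0]_(x <- v :: vs) x.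
Proof.
move=> v0; elim: vs => [|w ws IH] /=; first by rewrite big_cons big_nil (max_idPl v0).
by rewrite IH !big_cons maxCA.
Qed.

Lemma maxpair_bigE S : {in pair_dots S, forall v, 0 <= v} ->
  maxpair S = \big[Num.max/0]_(v <- pair_dots S) v.
Proof.
rewrite /maxpair -/(pair_dots S); case: (pair_dots S) => [|v vs] s0; first by rewrite big_nil.
exact/foldr_max_bigE/s0/mem_head.
Qed.

Lemma maxpair_le_subset S T : S `<=` T -> {in T &, forall x y, 0 <= dot x y} ->
  maxpair S <= maxpair T.
Proof.
move=> ST T0.
have sub_dots : {subset pair_dots S <= pair_dots T}.
  move=> v /pair_dotsP[x [y [xS yS xy ->]]].
  by apply/pair_dotsP; exists x, y; rewrite !(fsubsetP ST).
have T_dots0 : {in pair_dots T, forall v, 0 <= v}.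
  by move=> v /pair_dotsP[x [y [xT yT _ ->]]]; apply: T0.
rewrite !maxpair_bigE //; last by move=> v /sub_dots /T_dots0.
exact: sub_bigmax_seq.
Qed.

End MaxPair.

Section Gains.
Variables (R : realType) (d : nat).
Local Open Scope fset_scope.
Variables (k : nat) (lam mu : R) (q p : 'rV[R]_d) (S : {fset 'rV[R]_d}).
Hypotheses (lam_le1 : lam <= 1) (mu_ge0 : 0 <= mu).

(* No [1 < k] is needed: [k (k - 1) >= 0] for every natural [k]. *)
Lemma Delta_avg_le : {in S, forall p', 0 <= dot p p'} ->
  Delta_avg k lam mu q p S <= lam / k%:R * dot p q.
Proof.
move=> Sp; rewrite /Delta_avg lerBlDr lerDl.
have kk1_ge0 : 0 <= k%:R * (k%:R - 1) :> R.
  by case: k => [|k']; rewrite ?mul0r // mulr_ge0 // subr_ge0 ler1n.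
have coef_ge0 : 0 <= 2 * mu * (1 - lam) / (k%:R * (k%:R - 1)).
  by rewrite divr_ge0 // !mulr_ge0 // subr_ge0.
by rewrite mulr_ge0 // big_seq sumr_ge0.
Qed.

Lemma Delta_max_le : {in p |` S &, forall x y, 0 <= dot x y} ->
  Delta_max k lam mu q p S <= lam / k%:R * dot p q.
Proof.
move=> pS0; rewrite /Delta_max lerBlDr lerDl.
by rewrite mulr_ge0 ?mulr_ge0 ?subr_ge0 // maxpair_le_subset // fsubsetU1.
Qed.

End Gains.

Local Open Scope fset_scope.

Theorem theorem5 (R : realType) (d : nat) (P : {fset 'rV[R]_d}) (q : 'rV[R]_d)
  (k : nat) (lam mu : R)
  (hq : q != 0) (hk : (1 < k)%N) (hlam : 0 <= lam <= 1) (hmu : 0 < mu)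
  (hnn : forall x y, x \in q |` P -> y \in q |` P -> 0 <= dot x y)
  (N : {fset 'rV[R]_d}) (hNP : N `<=` P) (hN0 : N != fset0)
  (hc : node_center N != 0)
  (p : 'rV[R]_d) (hpN : p \in N) (hp0 : p != 0)
  (S : {fset 'rV[R]_d}) (hSP : S `<=` P) :
  let theta := angle (node_center N) q in
  let phi := angle p (node_center N) in
  let bound := lam / k%:R * vnorm p * vnorm q * cos `|theta - phi| in
  Delta_avg k lam mu q p S <= bound /\ Delta_max k lam mu q p S <= bound.
Proof.
move=> theta phi bound; case/andP: hlam => lam_ge0 lam_le1.
have dot_pq_le : lam / k%:R * dot p q <= bound.
  rewrite /bound -!(mulrA (lam / k%:R)); apply: ler_wpM2l; first exact: divr_ge0.
  by rewrite cos_norm dot_le_cos_angleB.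
have P_dot_ge0 : {in P &, forall x y, 0 <= dot x y}.
  by move=> x y xP yP; apply: hnn; rewrite inE ?xP ?yP orbT.
have pP : p \in P := fsubsetP hNP p hpN.
have pSP : p |` S `<=` P by rewrite fsubUset fsub1set pP.
split; apply: le_trans dot_pq_le.
  by apply: Delta_avg_le lam_le1 (ltW hmu) _ => p' p'S; rewrite P_dot_ge0 // (fsubsetP hSP).
apply: Delta_max_le lam_le1 (ltW hmu) _ => x y xpS ypS.
by rewrite P_dot_ge0 // (fsubsetP pSP).
Qed.
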